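(* Let $\mathcal{A}$ be a finite set of hyperplanes through $0$ in a complex vector space $V_{\mathbb{C}}$, let $H\in\mathcal{A}$, and let $\sigma$ be an ordering of $\mathcal{A}$ compatible with $H$. Then for every $k\ge 1$, $$\mathrm{BCB}^k_\sigma(\mathcal{A})=\mathrm{BCB}^k_{\sigma\setminus H}(\mathcal{A}\setminus\{H\})\ \cup\ \big\{(l_\sigma(K_1),\dots,l_\sigma(K_{k-1}),H)\ :\ (K_1,\dots,K_{k-1})\in \mathrm{BCB}^{k-1}_{\sigma|H}(\mathcal{A}|H)\big\}.$$
   Context: For an arrangement $\mathcal{B}$ (finite set of hyperplanes through $0$ in a vector space), a set of its hyperplanes is independent if their defining linear forms (on the ambient space of $\mathcal{B}$) are linearly independent; $\mathrm{Or}^k(\mathcal{B})$ is the set of ordered independent $k$-tuples of elements of $\mathcal{B}$; an ordering is a bijection $\tau:\mathcal{B}\to\{1,\dots,|\mathcal{B}|\}$; and $\mathrm{BCB}^k_\tau(\mathcal{B})$ is the set of $S=(H_1,\dots,H_k)\in\mathrm{Or}^k(\mathcal{B})$ with $\tau(H_1)<\dots<\tau(H_k)$ such that for every $G\in\mathcal{B}$ not among the $H_i$, the set $\{G\}\cup\{H_i:\tau(H_i)>\tau(G)\}$ is independent. By convention $\mathrm{BCB}^0$ consists of the empty tuple. Given $H\in\mathcal{A}$: $\mathcal{A}\setminus\{H\}$ is the deleted arrangement in $V_{\mathbb{C}}$; $\mathcal{A}|H=\{H'\cap H: H'\in\mathcal{A}\setminus\{H\}\}$ is the arrangement of hyperplanes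 in $H$ (as a set of distinct subspaces); $\pi:\mathcal{A}\setminus\{H\}\to\mathcal{A}|H$, $H'\mapsto H'\cap H$. An ordering $\sigma$ of $\mathcal{A}$ is compatible with $H$ if (1) $\sigma(H)=|\mathcal{A}|$ and (2) whenever $H_1\cap H=H_3\cap H$ and $\sigma(H_1)<\sigma(H_2)<\sigma(H_3)$, then $H_1\cap H=H_2\cap H$. Then $\sigma\setminus H$ is the restriction of the order $\sigma$ to $\mathcal{A}\setminus\{H\}$, $\sigma|H$ is the induced ordering of $\mathcal{A}|H$ (well defined because by (2) each fiber of $\pi$ is an interval for $\sigma$; $K<K'$ iff the fiber over $K$ precedes the fiber over $K'$), and $l_\sigma:\mathcal{A}|H\to\mathcal{A}\setminus\{H\}$ sends $K$ to the element $H''$ with $\pi(H'')=K$ having the least $\sigma$-value. *)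

From HB Require Import structures.
From mathcomp Require Import all_boot all_order all_algebra.
From mathcomp Require Import complex.
From mathcomp Require Import reals.
Set Implicit Arguments. Unset Strict Implicit. Unset Printing Implicit Defensive.
Import Order.TTheory GRing.Theory Num.Theory.
Local Open Scope ring_scope.

Section Arrangements.
Variable (F : fieldType) (V : vectType F).

Definition hyperplane_in (W K : {vspace V}) : bool :=
  [&& (K <= W)%VS, (0 < \dim W)%N & \dim K == (\dim W).-1].

Definition arrangement_in (W : {vspace V}) (B : seq {vspace V}) : Prop :=
  uniq B /\ all (hyperplane_in W) B.

(* f is a linear form on W defining K : its kernel (inside W) is K.  Linear
   forms on W are represented as (restrictions to W of) linear functionals on V. *)
Definition defining_form (W K : {vspace V}) (f : 'Hom(V, F^o)) : Prop :=
  forall v, v \in W -> (f v == 0) = (v \in K).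

Definition independent_in (W : {vspace V}) (S : seq {vspace V}) : Prop :=
  forall fs : seq 'Hom(V, F^o), size fs = size S ->
    (forall i, (i < size S)%N -> defining_form W (nth 0%VS S i) (nth 0 fs i)) ->
    forall c : seq F, size c = size S ->
      (forall v, v \in W -> \sum_(i < size S) c`_i * (nth 0 fs i v : F) = 0) ->
      forall i, (i < size S)%N -> c`_i = 0.

Definition ordering_of (B : seq {vspace V}) (tau : {vspace V} -> nat) : Prop :=
  {in B &, injective tau} /\ forall G, G \in B -> (1 <= tau G <= size B)%N.

Definition Or (W : {vspace V}) (B : seq {vspace V}) (k : nat) (S : seq {vspace V})
  : Prop := [/\ size S = k, all (mem B) S & independent_in W S].

Definition BCB (W : {vspace V}) (B : seq {vspace V}) (tau : {vspace V} -> nat)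
  (k : nat) (S : seq {vspace V}) : Prop :=
  if k == 0%N then S = [::] else
  [/\ Or W B k S,
      sorted (fun x y => (tau x < tau y)%N) S &
      forall G, G \in B -> G \notin S ->
        independent_in W (G :: [seq Hi <- S | (tau G < tau Hi)%N])].

Definition deletion (A : seq {vspace V}) (H : {vspace V}) : seq {vspace V} :=
  [seq H' <- A | H' != H].

Definition restriction (A : seq {vspace V}) (H : {vspace V}) : seq {vspace V} :=
  undup [seq (H' :&: H)%VS | H' <- deletion A H].

Definition compatible (A : seq {vspace V}) (H : {vspace V})
  (sigma : {vspace V} -> nat) : Prop :=
  sigma H = size A /\
  forall H1 H2 H3, H1 \in A -> H2 \in A -> H3 \in A ->
    (H1 :&: H)%VS = (H3 :&: H)%VS ->
    (sigma H1 < sigma H2 < sigma H3)%N ->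
    (H1 :&: H)%VS = (H2 :&: H)%VS.

(* sigma \ H : the restriction of sigma to A \ {H} (same function). *)
Definition sigma_del (sigma : {vspace V} -> nat) : {vspace V} -> nat := sigma.

Definition l_sigma (A : seq {vspace V}) (H : {vspace V})
  (sigma : {vspace V} -> nat) (K : {vspace V}) : {vspace V} :=
  head K (sort (fun x y => (sigma x <= sigma y)%N)
               [seq H' <- deletion A H | (H' :&: H)%VS == K]).

(* sigma|H : the induced ordering of A|H; the fibre over K precedes the fibre over
   K' iff its least element (l_sigma) precedes, so sigma|H(K) is the rank of K. *)
Definition sigma_res (A : seq {vspace V}) (H : {vspace V})
  (sigma : {vspace V} -> nat) (K : {vspace V}) : nat :=
  count (fun K' => (sigma (l_sigma A H sigma K') <= sigma (l_sigma A H sigma K))%N)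
        (restriction A H).

End Arrangements.

From HB Require Import structures.
From mathcomp Require Import all_boot all_order all_algebra.
From mathcomp Require Import complex reals.
From mathcomp Require Import zify ring.
Set Implicit Arguments. Unset Strict Implicit. Unset Printing Implicit Defensive.
Import Order.TTheory GRing.Theory Num.Theory.

(* A family of hyperplanes of [W] is independent iff its intersection has
   codimension in [W] equal to its size.  Hence [H :: L] is independent in [W]
   iff the traces [X :&: H], [X \in L], are independent in [H].
   As [H] is [sigma]-last, a broken-circuit basis of [A] either avoids [H], and
   is then one of [A \ H], or ends with [H].  In the second case every other
   member [X] is the [sigma]-least element of its fibre over [X :&: H]: a
   smaller [G] in that fibre would make [G, X, H] dependent, since
   [G :&: H = X :&: H] lies in [X], either inside the basis or inside the
   broken-circuit set attached to [G].  So the basis is the lift of the family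
   of traces, and the broken-circuit conditions correspond through the trace. *)

Lemma all_subset (T : eqType) (a : pred T) (s t : seq T) :
  {subset s <= t} -> all a t -> all a s.
Proof. by move=> sub_st /allP a_t; apply/allP => x /sub_st /a_t. Qed.

Lemma sorted_ltn_rcons (T : Type) (key : T -> nat) s x :
  sorted (fun a b => key a < key b) (rcons s x) =
  all (fun y => key y < key x) s && sorted (fun a b => key a < key b) s.
Proof.
have lt_trans : transitive (fun a b => key a < key b) by move=> ? ? ?; apply: ltn_trans.
by rewrite !(sorted_pairwise lt_trans) pairwise_rcons.
Qed.

Lemma head_sort_key (T : eqType) (key : T -> nat) x0 s : s != [::] ->
  let m := head x0 (sort (fun x y => key x <= key y) s) in
  m \in s /\ forall y, y \in s -> key m <= key y.
Proof.
have := sort_sorted (fun x y => leq_total (key x) (key y)) s.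
have := mem_sort (fun x y => key x <= key y) s.
case: sort => [|m t] mem_mt sorted_mt nz_s /=.
  by case: s nz_s mem_mt => // x s _ /(_ x); rewrite mem_head.
rewrite -mem_mt mem_head; split=> // y; rewrite -mem_mt inE => /predU1P[-> //|t_y].
have le_trans : transitive (fun x y => key x <= key y) by move=> ? ? ?; apply: leq_trans.
by have /allP := order_path_min le_trans sorted_mt; apply.
Qed.

Lemma ltn_count_key (T : eqType) (key : T -> nat) s x y : y \in s ->
  (count (fun z => key z <= key x) s < count (fun z => key z <= key y) s) =
  (key x < key y).
Proof.
move=> s_y; apply/idP/idP => [|lt_xy].
  apply: contraTT; rewrite -!leqNgt => le_yx.
  by apply: sub_count => z /= /leq_trans; apply.
elim: s s_y => [|z s IHs] //=; rewrite inE => /predU1P[<-|s_y].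
  rewrite leqnn (leqNgt (key y)) lt_xy add0n add1n ltnS.
  by apply: sub_count => u /= /leq_trans; apply; apply: ltnW.
have := IHs s_y; case: (leqP (key z) (key x)) => [le_zx|_] lt_count.
  by rewrite (leq_trans le_zx (ltnW lt_xy)) !add1n ltnS.
by rewrite add0n (leq_trans lt_count) ?leq_addl.
Qed.

(** * Flats of hyperplanes *)

Section Flats.
Variables (F : fieldType) (V : vectType F).
Implicit Types (U W K : {vspace V}) (s t : seq {vspace V}).

Definition flat W s := (W :&: \bigcap_(K <- s) K)%VS.

Lemma flat_nil W : flat W [::] = W.
Proof. by rewrite /flat big_nil capvf. Qed.

Lemma flat_cat W s t : flat W (s ++ t) = flat (flat W s) t.
Proof. by rewrite /flat big_cat capvA. Qed.

Lemma flat_cons W K s : flat W (K :: s) = (flat W s :&: K)%VS.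
Proof. by rewrite /flat big_cons capvA [(W :&: K)%VS]capvC -capvA capvC. Qed.

Lemma perm_flat W s t : perm_eq s t -> flat W s = flat W t.
Proof. by move=> est; rewrite /flat (perm_big _ est). Qed.

Lemma flat_subv W s : (flat W s <= W)%VS.
Proof. exact: capvSl. Qed.

Lemma mem_flat W s v : (v \in flat W s) = (v \in W) && all (fun K => v \in K) s.
Proof.
elim: s => [|K s IHs]; first by rewrite flat_nil andbT.
by rewrite flat_cons memv_cap IHs /= andbA andbAC.
Qed.

Lemma dimv_cap_hyperplane W K U : hyperplane_in W K -> (U <= W)%VS ->
  ~~ (U <= K)%VS -> (\dim (U :&: K)).+1 = \dim U.
Proof.
case/and3P=> sKW dW /eqP dK sUW nsUK.
have dUK_W : \dim (U + K) <= \dim W by apply/dimvS; rewrite subv_add sUW sKW.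
have dK_UK : \dim K < \dim (U + K).
  rewrite ltn_neqAle; case: (dimv_leqif_sup (addvSr U K)) => -> ->.
  by rewrite subv_add negb_and nsUK.
have := dimv_sum_cap U K; rewrite dK in dK_UK *; lia.
Qed.

Lemma dimv_cap_hyperplane_leq W K U : hyperplane_in W K -> (U <= W)%VS ->
  \dim U <= (\dim (U :&: K)).+1.
Proof.
move=> hK sUW; have [/capv_idPl -> //|nsUK] := boolP (U <= K)%VS.
by rewrite (dimv_cap_hyperplane hK sUW nsUK).
Qed.

Lemma dimv_flat_leq W U s : (U <= W)%VS -> all (hyperplane_in W) s ->
  \dim U <= \dim (flat U s) + size s.
Proof.
elim: s U => [|K s IHs] U sUW /=; first by rewrite flat_nil addn0.
case/andP=> hK hs; rewrite -cat1s flat_cat /= flat_cons flat_nil.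
have := dimv_cap_hyperplane_leq hK sUW.
have := IHs (U :&: K)%VS (subv_trans (capvSl _ _) sUW) hs; lia.
Qed.

End Flats.

(** * Independence as codimension *)

Section DefiningForms.
Variables (F : fieldType) (V : vectType F).
Implicit Types (W K : {vspace V}) (s : seq {vspace V}).
Local Open Scope ring_scope.

Lemma exists_defining_form W K : hyperplane_in W K ->
  exists f : 'Hom(V, F^o), defining_form W K f.
Proof.
move=> hK; have /and3P[sKW dW /eqP dK] := hK.
have /subvPn[w Ww nKw] : ~~ (W <= K)%VS.
  by apply: contraTN dW => /dimvS; rewrite dK; lia.
have nz_w : w != 0 by apply: contraNneq nKw => ->; apply: mem0v.
have wK0 : (<[w]> :&: K = 0)%VS.
  apply/eqP; rewrite -subv0; apply/subvP => x /memv_capP[/vlineP[a ->] Kaw].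
  rewrite memv0 scaler_eq0; apply: contraNT nKw => /norP[nz_a _].
  by rewrite -[w](scalerK nz_a) memvZ.
have sWwK : (W <= <[w]> + K)%VS.
  have swKW : (<[w]> + K <= W)%VS by rewrite subv_add -memvE Ww sKW.
  rewrite -(dimv_leqif_sup swKW).2; apply/eqP.
  have := dimv_sum_cap <[w]> K; rewrite wK0 dimv0 dim_vline nz_w dK; lia.
(* [f v] is the [w]-coordinate of the projection of [W = <[w]> + K] onto [<[w]>] along [K] *)
pose P := daddv_pi <[w]> K.
pose f : 'Hom(V, F^o) := (linfun (coord [tuple w] ord0 : V -> F^o) \o P)%VF.
have Pf v : P v = (f v : F) *: w.
  have [a Pv] := vlineP _ _ (memv_pi <[w]> K v).
  rewrite /f comp_lfunE lfunE /= -/P Pv linearZ /=.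
  by rewrite (coord_free ord0 ord0 (_ : free [tuple w])) ?seq1_free // mulr1.
exists f => v Wv; have vwK := subvP sWwK v Wv.
have <- : (P v == 0) = (f v == 0) by rewrite Pf scaler_eq0 (negPf nz_w) orbF.
have {2}-> : v = P v + daddv_pi K <[w]> v by rewrite daddv_pi_add.
rewrite rpredDr ?memv_pi //; apply/eqP/idP => [-> | KPv]; first exact: mem0v.
by apply/eqP; rewrite -memv0 -wK0 memv_cap memv_pi.
Qed.

Lemma vanishing_form_span (gs : seq 'Hom(V, F^o)) W (f : 'Hom(V, F^o)) :
  (forall v, v \in W -> all (fun g : 'Hom(V, F^o) => g v == 0) gs -> f v = 0) ->
  exists2 c : seq F, size c = size gs &
    forall v, v \in W -> f v = \sum_(i < size gs) c`_i * gs`_i v.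
Proof.
elim: gs W f => [|g gs IHgs] W f f0.
  by exists [::] => // v Wv; rewrite big_ord0 f0.
have [c' size_c' f_c'] : exists2 c' : seq F, size c' = size gs &
    forall v, v \in (W :&: lker g)%VS -> f v = \sum_(i < size gs) c'`_i * gs`_i v.
  apply: IHgs => v /memv_capP[Wv]; rewrite memv_ker => gv0 gsv0.
  by apply: f0 => //=; rewrite gv0.
pose comb v := \sum_(i < size gs) c'`_i * gs`_i v.
have [sWg | /subvPn[w Ww]] := boolP (W <= lker g)%VS.
  exists (0 :: c'); first by rewrite /= size_c'.
  move=> v Wv; rewrite big_ord_recl /= mul0r add0r f_c' //.
  by rewrite memv_cap Wv (subvP sWg).
rewrite memv_ker => gw_neq0.
exists ((f w - comb w) / g w :: c'); first by rewrite /= size_c'.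
move=> v Wv; rewrite big_ord_recl /=.
(* [v = (v - t w) + t w] with [v - t w] in [W :&: lker g], where [f] agrees with [comb] *)
pose t := g v / g w.
have lin (h : 'Hom(V, F^o)) : h (v - t *: w) = h v - t * h w.
  by rewrite linearB linearZ.
have vtw_ker : v - t *: w \in (W :&: lker g)%VS.
  by rewrite memv_cap rpredB ?rpredZ //= memv_ker lin /t divfK ?subrr.
have comb_lin : comb (v - t *: w) = comb v - t * comb w.
  rewrite /comb mulr_sumr -sumrB; apply: eq_bigr => i _.
  by rewrite lin mulrBr mulrCA.
rewrite -/(comb v) -/(comb w).
have := f_c' _ vtw_ker; rewrite lin -/(comb (v - t *: w)) comb_lin.
move=> /(canRL (subrK _)) ->; rewrite /t; ring.
Qed.


Definition defining_forms W s (fs : seq 'Hom(V, F^o)) :=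
  size fs = size s /\
  forall i, (i < size s)%N -> defining_form W (nth 0%VS s i) fs`_i.

Definition free_on W (fs : seq 'Hom(V, F^o)) :=
  forall c : seq F, size c = size fs ->
    (forall v, v \in W -> \sum_(i < size fs) c`_i * fs`_i v = 0) ->
    forall i, (i < size fs)%N -> c`_i = 0.

Lemma independent_inP W s :
  independent_in W s <-> forall fs, defining_forms W s fs -> free_on W fs.
Proof.
split=> [ind_s fs [size_fs def_fs] | free_s fs size_fs def_fs].
  by rewrite /free_on size_fs; apply: ind_s.
by have := free_s fs (conj size_fs def_fs); rewrite /free_on size_fs.
Qed.

Lemma defining_forms_cons W K s f fs :
  defining_forms W (K :: s) (f :: fs) <-> defining_form W K f /\ defining_forms W s fs.
Proof.
split=> [[[size_fs] def_fs] | [def_f [size_fs def_fs]]].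
  by split; [apply: (def_fs 0%N) | split=> // i; apply: (def_fs i.+1)].
by split=> [/=|[|i] //]; [rewrite size_fs | apply: def_fs].
Qed.

Lemma exists_defining_forms W s : all (hyperplane_in W) s ->
  exists fs, defining_forms W s fs.
Proof.
elim: s => [_|K s IHs /andP[/exists_defining_form[f def_f] /IHs[fs def_fs]]].
  by exists [::].
by exists (f :: fs); apply/defining_forms_cons.
Qed.

Lemma free_on_behead W f fs : free_on W (f :: fs) -> free_on W fs.
Proof.
move=> free_ffs c size_c c_rel i lt_i_fs.
apply: (free_ffs (0 :: c) _ _ i.+1) => //=; first by rewrite size_c.
by move=> v Wv; rewrite big_ord_recl /= mul0r add0r c_rel.
Qed.

Lemma defining_forms_flat W s fs v : defining_forms W s fs -> v \in W ->
  all (fun f : 'Hom(V, F^o) => f v == 0) fs -> v \in flat W s.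
Proof.
case=> size_fs def_fs Wv /all_nthP fs_v0; rewrite mem_flat Wv.
apply/(all_nthP 0%VS) => i lt_i_s; rewrite -(def_fs i lt_i_s v Wv).
by apply: fs_v0; rewrite size_fs.
Qed.

Lemma free_on_dim_flat W s fs : all (hyperplane_in W) s ->
  defining_forms W s fs -> free_on W fs -> (\dim (flat W s) + size s)%N = \dim W.
Proof.
elim: s fs => [|K s IHs] [|f fs] //=; first by rewrite flat_nil addn0.
- by move=> _ [].
- by move=> _ [].
case/andP=> hK hs /defining_forms_cons[def_f def_fs] free_ffs.
have dim_s := IHs _ hs def_fs (free_on_behead free_ffs).
(* otherwise [f] would be a combination of [fs] on [W] *)
have nsub_K : ~~ (flat W s <= K)%VS.
  apply/negP => sub_K.
  have [|c size_c f_c] := @vanishing_form_span fs W f.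
    move=> v Wv fs_v0; apply/eqP; rewrite def_f //.
    exact/(subvP sub_K)/(defining_forms_flat def_fs).
  suff /eqP : (-1 :: c)`_0 = 0 by rewrite oppr_eq0 oner_eq0.
  apply: free_ffs => //=; first by rewrite size_c.
  by move=> v Wv; rewrite big_ord_recl /= f_c // mulN1r addNr.
rewrite flat_cons; have := dimv_cap_hyperplane hK (flat_subv W s) nsub_K; lia.
Qed.

Lemma dim_flat_free_on W s fs : all (hyperplane_in W) s ->
  defining_forms W s fs -> (\dim (flat W s) + size s)%N = \dim W -> free_on W fs.
Proof.
elim: s fs => [|K s IHs] [|f fs] //; first by move=> _ [].
case/andP=> hK hs /defining_forms_cons[def_f def_fs] /=.
rewrite flat_cons => dim_Ks.
have dim_s := dimv_flat_leq (subvv W) hs.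
have dim_cap := dimv_cap_hyperplane_leq hK (flat_subv W s).
have nsub_K : ~~ (flat W s <= K)%VS.
  by apply/negP => /capv_idPl eq_K; rewrite eq_K in dim_Ks; lia.
have free_fs : free_on W fs by apply: IHs => //; lia.
have /subvPn[v s_v nKv] := nsub_K; have Wv := subvP (flat_subv W s) v s_v.
case=> [|c0 c] //= [size_c] c_rel.
have c0_eq0 : c0 = 0.
  have := c_rel v Wv; rewrite big_ord_recl big1 => [|i _] /=.
    by rewrite addr0 => /eqP; rewrite mulf_eq0 def_f // (negPf nKv) orbF => /eqP.
  case: def_fs => size_fs def_s; have lt_i_s : (i < size s)%N by rewrite -size_fs.
  move: s_v; rewrite mem_flat => /andP[_ /(all_nthP 0%VS) /(_ i lt_i_s)].
  by rewrite -def_s // => /eqP ->; rewrite mulr0.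
have c_eq0 : forall i, (i < size fs)%N -> c`_i = 0.
  apply: free_fs => // u Wu; have := c_rel u Wu.
  by rewrite big_ord_recl /= c0_eq0 mul0r add0r.
by case=> [|i] //= /c_eq0.
Qed.

Lemma independent_inE W s : all (hyperplane_in W) s ->
  independent_in W s <-> (\dim (flat W s) + size s)%N = \dim W.
Proof.
move=> hs; rewrite independent_inP; split=> [free_s | dim_s fs def_fs].
  have [fs def_fs] := exists_defining_forms hs.
  exact: free_on_dim_flat hs def_fs (free_s fs def_fs).
exact: dim_flat_free_on hs def_fs dim_s.
Qed.

End DefiningForms.

Section Independence.
Variables (F : fieldType) (V : vectType F).
Implicit Types (U W H K X Y Z : {vspace V}) (s t : seq {vspace V}).

Lemma independent_perm W s t : all (hyperplane_in W) s -> perm_eq s t ->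
  independent_in W s -> independent_in W t.
Proof.
move=> hs est; have ht : all (hyperplane_in W) t by rewrite -(perm_all _ est).
by rewrite !independent_inE // (perm_flat W est) (perm_size est).
Qed.

Lemma independent_behead W K s : all (hyperplane_in W) (K :: s) ->
  independent_in W (K :: s) -> independent_in W s.
Proof.
case/andP=> hK hs; rewrite !independent_inE /= ?hK // flat_cons.
have := dimv_flat_leq (subvv W) hs; have := dimv_cap_hyperplane_leq hK (flat_subv W s).
lia.
Qed.

Lemma not_independent_flat_subv W s X : all (hyperplane_in W) s -> X \in s ->
  (flat W (rem X s) <= X)%VS -> ~ independent_in W s.
Proof.
move=> hs s_X /capv_idPl sub_X; have est := perm_to_rem s_X.
have hrem : all (hyperplane_in W) (rem X s) by apply: all_subset hs => Y /mem_rem.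
rewrite independent_inE // (perm_flat W est) (perm_size est) flat_cons sub_X /=.
have := dimv_flat_leq (subvv W) hrem; lia.
Qed.


Lemma independent_uniq W s : all (hyperplane_in W) s -> independent_in W s -> uniq s.
Proof.
elim: s => [|K s IHs] // hKs ind_Ks; have /andP[hK hs] := hKs.
rewrite cons_uniq (IHs hs (independent_behead hKs ind_Ks)) andbT; apply/negP => s_K.
have sub_K : (flat W (rem K (K :: s)) <= K)%VS.
  by rewrite /= eqxx; apply/subvP => v; rewrite mem_flat => /andP[_ /allP]; apply.
exact: not_independent_flat_subv hKs (mem_head K s) sub_K ind_Ks.
Qed.

Lemma independent_sub W s t : all (hyperplane_in W) t -> independent_in W t ->
  uniq s -> {subset s <= t} -> independent_in W s.
Proof.
move=> ht ind_t uniq_s sub_st; have hs := all_subset sub_st ht.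
have [r est hr] : exists2 r, perm_eq t (s ++ r) & all (hyperplane_in W) r.
  exists [seq X <- t | X \notin s]; last first.
    by apply: all_subset ht => X; rewrite mem_filter => /andP[].
  rewrite -(perm_filterC (mem s)) perm_cat2r uniq_perm ?filter_uniq //.
    exact: independent_uniq ht ind_t.
  by move=> X; rewrite mem_filter andb_idr //; apply: sub_st.
move: ind_t; rewrite !independent_inE // (perm_flat W est) (perm_size est) flat_cat size_cat.
have := dimv_flat_leq (flat_subv W s) hr; have := dimv_flat_leq (subvv W) hs.
move: (\dim (flat W s)) (size s) (size r) => a b c; lia.
Qed.

Lemma independent_seq1 W K : hyperplane_in W K -> independent_in W [:: K].
Proof.
move=> hK; have /and3P[sKW dW /eqP dK] := hK.
rewrite independent_inE /= ?hK // flat_cons flat_nil (capv_idPr sKW) dK; lia.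
Qed.

Lemma independent_nsubv_cap W s X Y Z : all (hyperplane_in W) s -> independent_in W s ->
  X \in s -> Y \in s -> Z \in s -> Y != X -> Z != X -> ~~ (Y :&: Z <= X)%VS.
Proof.
move=> hs ind_s s_X s_Y s_Z neq_YX neq_ZX; apply/negP => sub_X.
have uniq_s := independent_uniq hs ind_s.
apply: (not_independent_flat_subv hs s_X _ ind_s); apply: subv_trans sub_X.
apply/subvP => v; rewrite mem_flat => /andP[_ /allP v_rem].
by rewrite memv_cap !v_rem // mem_rem_uniq // inE ?neq_YX ?neq_ZX.
Qed.

Lemma hyperplane_nsubv W X H : hyperplane_in W X -> hyperplane_in W H -> X != H ->
  ~~ (H <= X)%VS.
Proof.
case/and3P=> _ _ /eqP dX /and3P[_ _ /eqP dH]; apply: contraNN => sHX.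
by rewrite eq_sym -(dimv_leqif_eq sHX).2 dX dH.
Qed.

Lemma hyperplane_in_cap W X U : hyperplane_in W X -> (U <= W)%VS -> ~~ (U <= X)%VS ->
  hyperplane_in U (X :&: U).
Proof.
move=> hX sUW nsUX; have := dimv_cap_hyperplane hX sUW nsUX.
by rewrite /hyperplane_in capvSr capvC => <- /=; apply/eqP.
Qed.

Lemma independent_cap_cons W H L : hyperplane_in W H -> all (hyperplane_in W) L ->
  (forall X, X \in L -> ~~ (H <= X)%VS) ->
  independent_in H [seq X :&: H | X <- L]%VS <-> independent_in W (H :: L).
Proof.
move=> hH hL nsub_L; have /and3P[sHW dW /eqP dH] := hH.
have hLH : all (hyperplane_in H) [seq X :&: H | X <- L]%VS.
  rewrite all_map; apply/allP => X L_X.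
  exact: hyperplane_in_cap (allP hL X L_X) sHW (nsub_L X L_X).
rewrite !independent_inE /= ?hH //.
have -> : flat H [seq X :&: H | X <- L]%VS = flat W (H :: L).
  apply/vspaceP => v; rewrite !mem_flat /= all_map.
  case Hv: (v \in H); rewrite ?andbF // (subvP sHW) //=.
  by apply: eq_all => X /=; rewrite memv_cap Hv andbT.
rewrite size_map dH; lia.
Qed.

End Independence.

(** * Deletion and restriction *)

Lemma mem_deletion (F : fieldType) (V : vectType F) (A : seq {vspace V}) H X :
  (X \in deletion A H) = (X != H) && (X \in A).
Proof. exact: mem_filter. Qed.

Lemma BCBP (F : fieldType) (V : vectType F) W (B : seq {vspace V}) :
  all (hyperplane_in W) B -> forall tau k S,
  BCB W B tau k S <->
  [/\ size S = k, {subset S <= B}, independent_in W S,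
      sorted (fun x y => tau x < tau y) S &
      forall G, G \in B -> G \notin S ->
        independent_in W (G :: [seq Hi <- S | tau G < tau Hi])].
Proof.
move=> hB tau [|k] S; rewrite /BCB /=.
  split=> [-> | [/size0nil //]]; split=> // G B_G _.
  exact/independent_seq1/(allP hB).
by split=> [[[? /allP ? ?] ? ?] | [? /allP ? ? ? ?]]; split.
Qed.

Section DeletionRestriction.
Variables (F : fieldType) (V : vectType F) (W : {vspace V}).
Variables (A : seq {vspace V}) (H : {vspace V}) (sigma : {vspace V} -> nat).
Hypotheses (arr_A : arrangement_in W A) (A_H : H \in A).
Hypotheses (ord_sigma : ordering_of A sigma) (sigma_H : sigma H = size A).
Implicit Types (X Y K : {vspace V}) (L T : seq {vspace V}).

Local Notation del := (deletion A H).
Local Notation res := (restriction A H).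
Local Notation l := (l_sigma A H sigma).
Local Notation sres := (sigma_res A H sigma).
Local Notation pi := (fun X => X :&: H)%VS.

Lemma hyperplanes_A : all (hyperplane_in W) A.
Proof. by case: arr_A. Qed.

Lemma hyperplane_H : hyperplane_in W H.
Proof. exact: (allP hyperplanes_A). Qed.

Lemma deletion_sub : {subset del <= A}.
Proof. by move=> X; rewrite mem_deletion => /andP[]. Qed.

Lemma deletion_neq X : X \in del -> X != H.
Proof. by rewrite mem_deletion => /andP[]. Qed.

Lemma sigma_inj : {in A &, injective sigma}.
Proof. by case: ord_sigma. Qed.

Lemma sigma_leH X : X \in A -> sigma X <= sigma H.
Proof. by case: ord_sigma => _ /[apply] /andP[_]; rewrite sigma_H. Qed.

Lemma sigma_ltH X : X \in A -> X != H -> sigma X < sigma H.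
Proof.
move=> A_X neq_XH; rewrite ltn_neqAle sigma_leH // andbT.
by apply: contraNneq neq_XH => /sigma_inj ->.
Qed.

Lemma deletion_nsubv X : X \in del -> ~~ (H <= X)%VS.
Proof.
move=> del_X; apply: hyperplane_nsubv hyperplane_H (deletion_neq del_X).
exact/(allP hyperplanes_A)/deletion_sub.
Qed.

Lemma mem_restriction K : K \in res -> exists2 X, X \in del & K = pi X.
Proof. by rewrite mem_undup => /mapP. Qed.

Lemma restriction_cap X : X \in del -> pi X \in res.
Proof. by move=> del_X; rewrite mem_undup; apply: map_f. Qed.

Lemma hyperplanes_restriction : all (hyperplane_in H) res.
Proof.
apply/allP => K /mem_restriction[X del_X ->].
have hX : hyperplane_in W X by apply/(allP hyperplanes_A)/deletion_sub.
by apply: hyperplane_in_cap hX _ (deletion_nsubv del_X); case/and3P: hyperplane_H.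
Qed.

Lemma l_sigmaP K : K \in res ->
  [/\ l K \in del, pi (l K) = K & forall X, X \in del -> pi X = K -> sigma (l K) <= sigma X].
Proof.
case/mem_restriction => X del_X ->.
have fibre_X : X \in [seq Y <- del | pi Y == pi X] by rewrite mem_filter eqxx del_X.
have [|fibre_lK min_lK] := head_sort_key sigma (pi X) (_ : [seq Y <- del | pi Y == pi X] != [::]).
  by apply: contraTneq fibre_X => ->.
move: fibre_lK; rewrite mem_filter => /andP[/eqP pi_lK del_lK].
by split=> // Y del_Y pi_Y; apply: min_lK; rewrite mem_filter pi_Y eqxx.
Qed.

Lemma ltn_sigma_res K1 K2 : K2 \in res ->
  (sres K1 < sres K2) = (sigma (l K1) < sigma (l K2)).
Proof. exact: ltn_count_key. Qed.

Lemma independent_rcons_H L : {subset L <= del} ->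
  independent_in W (rcons L H) <-> independent_in H (map pi L).
Proof.
move=> sub_L.
have hL : all (hyperplane_in W) L by apply: all_subset hyperplanes_A => X /sub_L /deletion_sub.
have hHL : all (hyperplane_in W) (H :: L) by rewrite /= hyperplane_H.
have nsub_L : forall X, X \in L -> ~~ (H <= X)%VS by move=> X /sub_L /deletion_nsubv.
have iff_HL := independent_cap_cons hyperplane_H hL nsub_L.
have est : perm_eq (rcons L H) (H :: L) by rewrite perm_rcons.
have hLH : all (hyperplane_in W) (rcons L H) by rewrite all_rcons hyperplane_H.
split=> [ind_LH | /iff_HL ind_HL]; first exact/iff_HL/(independent_perm hLH est).
by apply: (independent_perm hHL) ind_HL; rewrite perm_sym.
Qed.

Lemma BCB_deletion k S :
  BCB W del (sigma_del sigma) k S <-> BCB W A sigma k S /\ H \notin S.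
Proof.
have hdel : all (hyperplane_in W) del by apply: all_subset hyperplanes_A; apply: deletion_sub.
rewrite !BCBP ?hyperplanes_A //; split.
  case=> size_S sub_S ind_S sorted_S bc_S.
  have S_H : H \notin S by apply/negP => /sub_S /deletion_neq /eqP.
  split=> //; split=> // [X /sub_S /deletion_sub // | G A_G S_G].
  have [-> | neq_GH] := eqVneq G H; last by apply: bc_S; rewrite // mem_deletion neq_GH.
  rewrite (eq_in_filter (a2 := pred0)) ?filter_pred0; first exact: independent_seq1 hyperplane_H.
  by move=> X /sub_S /deletion_sub A_X /=; rewrite ltnNge sigma_leH.
case=> -[size_S sub_S ind_S sorted_S bc_S] S_H.
split=> // [X S_X | G /deletion_sub]; last exact: bc_S.
by rewrite mem_deletion sub_S // andbT; apply: contraNneq S_H => <-.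
Qed.

Lemma not_independent_fibre s X Y : all (hyperplane_in W) s ->
  X \in del -> Y != X -> pi X = pi Y ->
  X \in s -> Y \in s -> H \in s -> ~ independent_in W s.
Proof.
move=> hs del_X neq_YX pi_XY s_X s_Y s_H ind_s.
have neq_HX : H != X by rewrite eq_sym deletion_neq.
by have := independent_nsubv_cap hs ind_s s_X s_Y s_H neq_YX neq_HX; rewrite -pi_XY capvSl.
Qed.

Lemma BCB_rcons_H k S : BCB W A sigma k S -> H \in S ->
  exists2 S', S = rcons S' H & {subset S' <= del}.
Proof.
case/BCBP=> [|_ sub_S _ sorted_S _]; first exact: hyperplanes_A.
case/lastP: S sub_S sorted_S => [//|S' X] sub_S; rewrite sorted_ltn_rcons.
case/andP=> /allP lt_X _ S_H.
have X_H : X = H.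
  apply: contraTeq S_H => neq_XH; rewrite mem_rcons inE eq_sym (negPf neq_XH) /=.
  by apply/negP => /lt_X; rewrite ltnNge sigma_leH // sub_S // mem_rcons mem_head.
exists S' => [|Y S'_Y]; first by rewrite X_H.
rewrite mem_deletion sub_S ?mem_rcons ?inE ?S'_Y ?orbT // andbT.
by apply: contraTneq (lt_X Y S'_Y) => ->; rewrite X_H ltnn.
Qed.


Lemma l_sigma_BCB k S' X : BCB W A sigma k (rcons S' H) -> {subset S' <= del} ->
  X \in S' -> l (pi X) = X.
Proof.
case/BCBP=> [|_ sub_S ind_S _ bc_S]; first exact: hyperplanes_A.
move=> sub_S' S'_X; have del_X := sub_S' X S'_X.
have [del_G pi_G min_G] := l_sigmaP (restriction_cap del_X).
set G := l (pi X) in del_G pi_G min_G *; have A_G := deletion_sub del_G.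
apply/eqP; apply: contraT => neq_GX; exfalso.
have hS : all (hyperplane_in W) (rcons S' H) := all_subset sub_S hyperplanes_A.
have S_X : X \in rcons S' H by rewrite mem_rcons inE S'_X orbT.
have S_H : H \in rcons S' H by rewrite mem_rcons mem_head.
have [S_G | S_G] := boolP (G \in rcons S' H).
  exact: not_independent_fibre hS del_X neq_GX (esym pi_G) S_X S_G S_H ind_S.
(* otherwise the broken-circuit condition for [G] makes [G, X, H] independent *)
have lt_GX : sigma G < sigma X.
  rewrite ltn_neqAle min_G // andbT; apply: contra neq_GX => /eqP eq_GX.
  by apply/eqP/sigma_inj; rewrite // deletion_sub.
have hs : all (hyperplane_in W) (G :: [seq Y <- rcons S' H | sigma G < sigma Y]).
  rewrite /= (allP hyperplanes_A) //.
  by apply: all_subset hS => Y; rewrite mem_filter => /andP[].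
apply: (not_independent_fibre hs del_X neq_GX (esym pi_G)) (bc_S G A_G S_G).
- by rewrite inE mem_filter lt_GX S_X orbT.
- exact: mem_head.
- by rewrite inE mem_filter S_H sigma_ltH ?deletion_neq ?orbT.
Qed.


Lemma BCB_restriction_of_BCB k S' : BCB W A sigma k (rcons S' H) ->
  {subset S' <= del} -> BCB H res sres k.-1 (map pi S').
Proof.
move=> bcb_S sub_S'; have l_S' := l_sigma_BCB bcb_S sub_S'.
case/BCBP: bcb_S => [|size_S _ ind_S sorted_S bc_S]; first exact: hyperplanes_A.
have res_S' X : X \in S' -> pi X \in res by move/sub_S'/restriction_cap.
have ltn_sres K Y : Y \in S' -> (sres K < sres (pi Y)) = (sigma (l K) < sigma Y).
  by move=> S'_Y; rewrite ltn_sigma_res ?res_S' // (l_S' Y S'_Y).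
apply/BCBP; first exact: hyperplanes_restriction.
split.
- by rewrite size_map -size_S size_rcons.
- by move=> K /mapP[X S'_X ->]; apply: res_S'.
- exact/independent_rcons_H.
- move: sorted_S; rewrite sorted_ltn_rcons sorted_map => /andP[_].
  apply: (sub_in_sorted (P := mem S')); last exact/allP.
  by move=> X Y S'_X S'_Y /=; rewrite ltn_sres // l_S'.
move=> K res_K T_K; have [del_G pi_G _] := l_sigmaP res_K.
set G := l K in del_G pi_G *; have A_G := deletion_sub del_G.
have S_G : G \notin rcons S' H.
  rewrite mem_rcons inE negb_or deletion_neq //=; apply: contra T_K => S'_G.
  by rewrite -pi_G; apply: map_f.
have sub_GS : {subset G :: [seq Y <- S' | sigma G < sigma Y] <= del}.
  by move=> Y; rewrite inE mem_filter => /predU1P[-> //|/andP[_ /sub_S']].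
have := bc_S G A_G S_G; rewrite filter_rcons sigma_ltH ?deletion_neq // -rcons_cons.
move/(independent_rcons_H sub_GS); rewrite /= pi_G filter_map.
suff -> : [seq X <- S' | sres K < sres (pi X)] = [seq X <- S' | sigma G < sigma X] by [].
by apply: eq_in_filter => X /ltn_sres.
Qed.


Lemma BCB_of_BCB_restriction k T : 0 < k -> BCB H res sres k.-1 T ->
  BCB W A sigma k (rcons (map l T) H).
Proof.
move=> k_gt0 /(BCBP hyperplanes_restriction) [size_T sub_T ind_T sorted_T bc_T].
have hT : all (hyperplane_in H) T := all_subset sub_T hyperplanes_restriction.
have l_T K : K \in T -> l K \in del /\ pi (l K) = K by move/sub_T/l_sigmaP => [].
have sub_lT : {subset map l T <= del} by move=> X /mapP[K /l_T[del_lK _] ->].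
have pi_lT : map pi (map l T) = T by rewrite -map_comp map_id_in // => K /l_T[].
apply/(BCBP hyperplanes_A); split.
- by rewrite size_rcons size_map size_T prednK.
- by move=> X; rewrite mem_rcons inE => /predU1P[-> //|/sub_lT/deletion_sub].
- by apply/independent_rcons_H => //; rewrite pi_lT.
- rewrite sorted_ltn_rcons sorted_map; apply/andP; split.
    by apply/allP => X /sub_lT del_X; rewrite sigma_ltH ?deletion_sub ?deletion_neq.
  apply: (sub_in_sorted (P := mem T)) sorted_T; last exact/allP.
  by move=> K1 K2 _ T_K2 /=; rewrite -ltn_sigma_res ?sub_T.
move=> G A_G S_G.
have neq_GH : G != H by apply: contraNneq S_G => ->; rewrite mem_rcons mem_head.
have del_G : G \in del by rewrite mem_deletion neq_GH.
have res_K : pi G \in res := restriction_cap del_G.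
have [_ _ /(_ G del_G erefl) le_lK_G] := l_sigmaP res_K.
have sub_GlT : {subset G :: [seq X <- map l T | sigma G < sigma X] <= del}.
  by move=> X; rewrite inE mem_filter => /predU1P[-> //|/andP[_ /sub_lT]].
rewrite filter_rcons sigma_ltH // -rcons_cons.
apply/(independent_rcons_H sub_GlT); rewrite /= filter_map -map_comp map_id_in; last first.
  by move=> K; rewrite mem_filter => /andP[_ /l_T[]].
have uniq_KT : uniq (pi G :: [seq K <- T | sigma G < sigma (l K)]).
  rewrite /= filter_uniq ?(independent_uniq hT ind_T) // andbT.
  by rewrite mem_filter negb_and -leqNgt le_lK_G.
(* [sigma (l (pi G)) <= sigma G], so the list is part of a known independent one *)
have [T_K | T_K] := boolP (pi G \in T).
  apply: independent_sub hT ind_T uniq_KT _ => K.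
  by rewrite inE mem_filter => /predU1P[-> //|/andP[]].
apply: independent_sub (bc_T _ res_K T_K) uniq_KT _ => [|K].
  rewrite /= (allP hyperplanes_restriction) //.
  by apply: all_subset hT => K; rewrite mem_filter => /andP[].
rewrite !inE !mem_filter => /predU1P[-> | /andP[lt_GlK T_K']]; first by rewrite eqxx.
by rewrite T_K' ltn_sigma_res ?sub_T // (leq_ltn_trans le_lK_G lt_GlK) orbT.
Qed.


Theorem BCB_deletion_restriction k S : 0 < k ->
  BCB W A sigma k S <->
  BCB W del (sigma_del sigma) k S \/
  exists2 T, BCB H res sres k.-1 T & S = rcons (map l T) H.
Proof.
move=> k_gt0; split=> [bcb_S | [/BCB_deletion[] // | [T bcb_T ->]]].
  have [S_H | S_H] := boolP (H \in S); last by left; apply/BCB_deletion.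
  have [S' eq_S sub_S'] := BCB_rcons_H bcb_S S_H; rewrite eq_S in bcb_S *.
  right; exists (map pi S'); first exact: BCB_restriction_of_BCB.
  by rewrite -map_comp map_id_in // => X /(l_sigma_BCB bcb_S sub_S').
exact: BCB_of_BCB_restriction.
Qed.

End DeletionRestriction.

Theorem mainTheorem5 (R : realType) (V : vectType R[i])
  (A : seq {vspace V}) (H : {vspace V}) (sigma : {vspace V} -> nat) :
  arrangement_in fullv A -> H \in A ->
  ordering_of A sigma -> compatible A H sigma ->
  forall k : nat, (1 <= k)%N ->
  forall S : seq {vspace V},
    BCB fullv A sigma k S <->
    (BCB fullv (deletion A H) (sigma_del sigma) k S \/
     exists2 T : seq {vspace V},
       BCB H (restriction A H) (sigma_res A H sigma) k.-1 T &
       S = rcons (map (l_sigma A H sigma) T) H).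
Proof.
move=> arr_A A_H ord_sigma [sigma_H _] k k_gt0 S.
exact: BCB_deletion_restriction.
Qed.
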